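(* Let $\mathbf{M}$ be a four-dimensional globally hyperbolic spacetime, $x\in\mathbf{M}$, and $n\geq1$ an integer. Suppose the renormalization polynomials of the locally covariant Wick powers satisfy $C_{2m}=(2m-1)!!\,\alpha^{m}R^{m}$ for all $m=1,\dots,n$, where $C_2=\alpha R$. Then a quasi-free Hadamard state $\omega$ on $\mathbf{M}$ is $\mathbf{T}_{2n}(x)$-thermal if and only if it is $\mathbf{T}_{2}(x)$-thermal. If moreover $n\geq 2$, then such a state has a sharp local temperature at $x$, i.e.\ the witnessing measure $\rho_x$ is a Dirac measure.
   Context: Consider the free massless conformally coupled scalar field on a globally hyperbolic spacetime $\mathbf{M}$ (signature $(-,+,+,+)$), with field equation $(-\Box+\tfrac16 R)\phi=0$, $R$ the Ricci scalar. For a Hadamard state, $:\!\phi^k\!:_h(x)$ denotes the Wick power obtained by point splitting and subtracting the Hadamard parametrix. The locally covariant Wick powers are $:\!\phi^{k}\!:_{\mathbf{M}}(x)=:\!\phi^{k}\!:_h(x)+\sum_{j=0}^{k-2}\binom{k}{j}C_{k-j}(x)\,:\!\phi^{j}\!:_h(x)$, where the $C_i$ are locally covariant polynomials with real coefficients in the metric and curvature with appropriate scaling dimension; in particular $C_2=\alpha R$ for a real constant $\alpha$. A state is quasi-free if its odd $n$-point functions vanish and its even ones are sums over pairings of products of two-point functions. In Minkowski spacetime, let $\omega_\beta$ ($\beta>0$) be the global thermal equilibrium state at inverse temperature $\beta$ of the free massless field; it satisfies $\omega_\beta(:\!\phi^{2k}\!:(0))=\frac{(2k-1)!!}{12^k\beta^{2k}}$.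 Let $\mathbf{T}_{2n}=\{\mathbf{1},:\!\phi^2\!:,\dots,:\!\phi^{2n}\!:\}$. A state $\omega$ on $\mathbf{M}$ is $\mathbf{T}_{2n}(x)$-thermal if there is a probability measure $\rho_x$ on $(0,\infty)$ with $\omega(:\!\phi^{2k}\!:_{\mathbf{M}}(x))=\int d\rho_x(\beta)\,\frac{(2k-1)!!}{12^k\beta^{2k}}$ for all $k=0,\dots,n$. It has a sharp local temperature at $x$ if $\rho_x$ is a Dirac measure. *)

From mathcomp Require Import all_boot all_order all_algebra.
From mathcomp Require Import all_classical all_reals all_analysis.
Set Implicit Arguments. Unset Strict Implicit. Unset Printing Implicit Defensive.
Import Order.TTheory GRing.Theory Num.Theory.
Local Open Scope classical_set_scope.
Local Open Scope ring_scope.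

(* odfact k = (2k-1)!! = 1 * 3 * ... * (2k-1), with odfact 0 = (-1)!! = 1. *)
Definition odfact (k : nat) : nat := \prod_(i < k) (2 * i + 1)%N.

(* h k models omega(:phi^k:_h(x)), the expectation value at the fixed point x
   of the Hadamard-point-split Wick power in the state omega.
   For a quasi-free Hadamard state, by Wick's theorem (pairings of the
   Hadamard-subtracted two-point function at coincidence):
   omega(1)=1, odd powers vanish, and omega(:phi^{2k}:_h) = (2k-1)!! omega(:phi^2:_h)^k. *)
Definition quasi_free_at {R : realType} (h : nat -> R) : Prop :=
  [/\ h 0%N = 1,
      (forall k, h k.*2.+1 = 0) &
      (forall k, h k.*2 = (odfact k)%:R * (h 2%N) ^+ k)].

(* omega(:phi^k:_M(x)) = omega(:phi^k:_h(x)) + sum_{j=0}^{k-2} binom(k,j) C_{k-j}(x) omega(:phi^j:_h(x)),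
   C i = value at x of the renormalization polynomial C_i. *)
Definition wickM {R : realType} (C h : nat -> R) (k : nat) : R :=
  h k + \sum_(0 <= j < k.-1) ('C(k, j))%:R * C (k - j)%N * h j.

Definition thermal_moment {R : realType} (k : nat) (beta : R) : R :=
  (odfact k)%:R / (12%:R ^+ k * beta ^+ (2 * k)).

(* rho (a probability measure on R concentrated on (0,oo), i.e. a probability
   measure on (0,oo)) witnesses T_{2n}(x)-thermality. *)
Definition thermal_witness {R : realType} (n : nat) (C h : nat -> R)
    (rho : probability R R) : Prop :=
  rho [set b : R | b <= 0] = 0%E /\
  forall k, (k <= n)%N ->
    (\int[rho]_(b in [set b : R | (0 < b)%R]) (thermal_moment k b)%:E)%E
       = (wickM C h k.*2)%:E.

Definition T_thermal {R : realType} (n : nat) (C h : nat -> R) : Prop :=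
  exists rho : probability R R, thermal_witness n C h rho.

Definition dirac_at_pos {R : realType} (rho : probability R R) : Prop :=
  exists beta : R, 0 < beta /\
    forall A : set R, measurable A -> rho A = \d_beta A.

From mathcomp Require Import all_boot all_order all_algebra.
From mathcomp Require Import all_classical all_reals all_analysis.
From mathcomp Require Import ring lra measurable_realfun.
Set Implicit Arguments. Unset Strict Implicit. Unset Printing Implicit Defensive.
Import Order.TTheory GRing.Theory Num.Theory.
Local Open Scope classical_set_scope.
Local Open Scope ring_scope.

(* With C_{2m} = (2m-1)!! (alpha R)^m, Wick's theorem and the identity
   'C(2k, 2i) (2(k-i)-1)!! (2i-1)!! = (2k-1)!! 'C(k, i) collapse the locally
   covariant expectation values to omega(:phi^{2k}:_M) = (2k-1)!! w^k with
   w = omega(:phi^2:_M).  Dividing out (2k-1)!!, a witness rho is the law of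
   u = 1 / (12 beta^2) with E[u^k] = w^k for k <= n.  The case k = 1 forces
   w > 0, and then the Dirac mass at the beta with u = w is a witness for every
   n.  For n >= 2, E[u^2] = E[u]^2 says that u has zero variance, so u = w
   rho-almost surely and rho is that Dirac mass. *)

Lemma odfactS m : odfact m.+1 = (odfact m * (2 * m + 1))%N.
Proof. by rewrite /odfact big_ord_recr. Qed.

Lemma odfact1 : odfact 1 = 1%N.
Proof. by rewrite /odfact big_ord1. Qed.

Lemma odfact_gt0 k : (0 < odfact k)%N.
Proof. by apply: prodn_gt0 => i; rewrite addn1. Qed.

Lemma odfact_fact m : (odfact m * 2 ^ m * m`! = (2 * m)`!)%N.
Proof.
elim: m => [|m IH]; first by rewrite /odfact big_ord0.
rewrite odfactS expnS factS.
have -> : (2 * m.+1 = (2 * m + 1).+1)%N by rewrite mulnS addn1 add2n.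
rewrite factS addn1 factS -addn1 -IH.
have -> : ((2 * m + 1).+1 = 2 * m.+1)%N by rewrite addn1 mulnS add2n.
ring.
Qed.

Lemma bin_double_odfact k i : (i <= k)%N ->
  ('C(2 * k, 2 * i) * odfact (k - i) * odfact i = odfact k * 'C(k, i))%N.
Proof.
move=> ik.
have fact_gt0 : (0 < 2 ^ k * (i`! * (k - i)`!))%N.
  by rewrite !muln_gt0 expn_gt0 !fact_gt0.
apply/eqP; rewrite -(eqn_pmul2r fact_gt0); apply/eqP.
have ik2 : (2 * i <= 2 * k)%N by rewrite leq_mul2l.
have -> : (odfact k * 'C(k, i) * (2 ^ k * (i`! * (k - i)`!)) = (2 * k)`!)%N.
  by rewrite -odfact_fact -(bin_fact ik); ring.
rewrite -(bin_fact ik2) -mulnBr -!odfact_fact.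
have -> : (2 ^ k = 2 ^ i * 2 ^ (k - i))%N by rewrite -expnD subnKC.
ring.
Qed.

Lemma big_nat_even_odd (V : nmodType) (F : nat -> V) m :
  \sum_(0 <= j < (2 * m).+1) F j =
  \sum_(0 <= i < m.+1) F (2 * i)%N + \sum_(0 <= i < m) F (2 * i).+1.
Proof.
elim: m => [|m IH]; first by rewrite !big_nat1 big_geq// muln0 addr0.
have e : (2 * m.+1 = (2 * m).+2)%N by rewrite mulnS add2n.
rewrite e big_nat_recr // big_nat_recr //= IH.
rewrite (big_nat_recr m.+1) // (big_nat_recr m) //= e.
by rewrite [in RHS]big_nat_recr //= -!addrA (addrC (F (2 * m).+2)) -addrA.
Qed.

Lemma wickM_even (R : realType) n (a : R) (C h : nat -> R) k :
  (forall m, (1 <= m <= n)%N -> C m.*2 = (odfact m)%:R * a ^+ m) ->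
  quasi_free_at h -> (k <= n)%N ->
  wickM C h k.*2 = (odfact k)%:R * (h 2%N + a) ^+ k.
Proof.
move=> HC [h0 h_odd h_even] kn.
case: k kn => [|m] kn.
  by rewrite /wickM big_geq // h0 addr0 /odfact big_ord0 expr0 mulr1.
set k := m.+1; rewrite /wickM.
have -> : (k.*2).-1 = (2 * m).+1 by rewrite /k -mul2n mulnS add2n.
rewrite big_nat_even_odd [X in _ + (_ + X)]big1_seq ?addr0; last first.
  by move=> i _; rewrite mul2n h_odd mulr0.
rewrite big_mkord addrC (addrC (h 2%N)) exprDn [in RHS]big_ord_recr /= mulrDr.
congr (_ + _); first last.
  by rewrite subnn expr0 mul1r binn mulr1n h_even mulrC.
rewrite mulr_sumr; apply: eq_bigr => -[i /= ik] _.
have ik' : (i <= k)%N by apply: ltnW.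
rewrite mul2n h_even.
have -> : (k.*2 - i.*2 = (k - i).*2)%N by rewrite -!mul2n mulnBr.
rewrite HC ?subn_gt0 ?ik ?(leq_trans (leq_subr _ _) kn) //.
have /(congr1 (fun x => x%:R : R)) := @bin_double_odfact k i ik'.
rewrite !natrM -!mul2n => bin_odfact.
transitivity (('C(2 * k, 2 * i))%:R * (odfact (k - i))%:R * (odfact i)%:R *
   (a ^+ (k - i) * h 2%N ^+ i)); first by ring.
by rewrite bin_odfact -mulr_natr; ring.
Qed.

Section null_sets.
Context d (T : measurableType d) (R : realType).

Lemma ge0_integral_eq0_negligible (mu : measure T R) (D : set T) (f : T -> R) :
  measurable D -> measurable_fun D f -> (forall x, D x -> 0 <= f x) ->
  (\int[mu]_(x in D) (f x)%:E = 0)%E ->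
  mu.-negligible (D `&` [set x | f x != 0]).
Proof.
move=> mD mf f_ge0 If0.
have : (\int[mu]_(x in D) `|(f x)%:E| = 0)%E.
  by rewrite -If0; apply: eq_integral => x /[!inE] Dx; rewrite gee0_abs ?lee_fin ?f_ge0.
move/(ae_eq_integral_abs mu mD ((measurable_EFinP _ _).2 mf)) => f_ae0.
apply: negligibleS f_ae0 => x [Dx fx0] /(_ Dx) /= [fx0'].
by move: fx0; rewrite /= fx0' eqxx.
Qed.

Lemma gt0_integral_gt0 (mu : measure T R) (D : set T) (f : T -> R) :
  measurable D -> measurable_fun D f -> (forall x, D x -> 0 < f x) ->
  mu D != 0%E -> (0 < \int[mu]_(x in D) (f x)%:E)%E.
Proof.
move=> mD mf f_gt0 muD0.
rewrite lt_neqAle integral_ge0 ?andbT; last by move=> x Dx; rewrite lee_fin ltW ?f_gt0.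
apply: contra muD0 => /eqP/esym If0.
have := ge0_integral_eq0_negligible mD mf (fun x Dx => ltW (f_gt0 x Dx)) If0.
rewrite (_ : _ `&` _ = D); first by move/(measure_negligible mD) ->.
by apply/seteqP; split => [x []//|x Dx]; split => //=; rewrite gt_eqF ?f_gt0.
Qed.

Lemma integral_sqr_eq_negligible (mu : measure T R) (D : set T) (f : T -> R) (t : R) :
  measurable D -> mu D = 1%E -> measurable_fun D f -> (forall x, D x -> 0 <= f x) ->
  (\int[mu]_(x in D) (f x)%:E = t%:E)%E ->
  (\int[mu]_(x in D) (f x ^+ 2)%:E = (t ^+ 2)%:E)%E ->
  mu.-negligible (D `&` [set x | f x != t]).
Proof.
move=> mD muD1 mf f_ge0 If If2.
have t_ge0 : 0 <= t.
  by rewrite -lee_fin -If integral_ge0 // => x Dx; rewrite lee_fin f_ge0.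
pose g x := (f x - t) ^+ 2.
have mg : measurable_fun D g.
  by apply: measurable_funX; apply: measurable_funB => //; exact: measurable_cst.
have g_ge0 x : D x -> 0 <= g x by rewrite sqr_ge0.
have mEg : measurable_fun D (fun x => (g x)%:E) by exact/measurable_EFinP.
have Eg_ge0 x : D x -> (0 <= (g x)%:E)%E by rewrite lee_fin sqr_ge0.
have mE2tf : measurable_fun D (fun x => (2 * t * f x)%:E).
  by apply/measurable_EFinP; exact: (measurableT_comp (mulrl_measurable _) mf).
have E2tf_ge0 x : D x -> (0 <= (2 * t * f x)%:E)%E.
  by move=> Dx; rewrite lee_fin !mulr_ge0 ?f_ge0.
have mEf2 : measurable_fun D (fun x => (f x ^+ 2)%:E).
  by apply/measurable_EFinP; exact: measurable_funX.
have Ef2_ge0 x : D x -> (0 <= (f x ^+ 2)%:E)%E by rewrite lee_fin sqr_ge0.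
have expand x : x \in D ->
    ((g x)%:E + (2 * t * f x)%:E = (f x ^+ 2)%:E + (t ^+ 2)%:E)%E.
  by move=> _; rewrite -!EFinD /g; congr EFin; ring.
have I2tf : (\int[mu]_(x in D) (2 * t * f x)%:E = (t ^+ 2 *+ 2)%:E)%E.
  under eq_integral do rewrite EFinM.
  rewrite ge0_integralZl ?lee_fin ?mulr_ge0 //; last exact/measurable_EFinP.
  by rewrite If -EFinM; congr EFin; ring.
(* (f - t)^2 + 2 t f = f^2 + t^2 has nonnegative terms only, so no integrability
   assumption is needed to integrate it. *)
have Ig : (\int[mu]_(x in D) (g x)%:E + (t ^+ 2 *+ 2)%:E = (t ^+ 2 *+ 2)%:E)%E.
  rewrite -{1}I2tf -ge0_integralD // (eq_integral _ _ expand) ge0_integralD //.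
    by rewrite If2 integral_cst // muD1 mule1 -EFinD mulr2n.
  by move=> x _; rewrite lee_fin sqr_ge0.
have Ig0 : (\int[mu]_(x in D) (g x)%:E = 0)%E.
  move: Ig; set I := (\int[mu]_(x in D) _)%E.
  by case: I => [r| |] //= [r0]; congr EFin; lra.
apply: negligibleS (ge0_integral_eq0_negligible mD mg g_ge0 Ig0) => x [Dx ft].
by split => //=; rewrite /g sqrf_eq0 subr_eq0.
Qed.

Lemma negligible_setC1_dirac (P : probability T R) (a : T) :
  measurable [set a] -> P.-negligible (~` [set a]) ->
  forall A, measurable A -> P A = \d_a A.
Proof.
move=> ma Pa0 A mA.
have Pa1 : P [set a] = 1%E.
  rewrite -(setCK [set a]) probability_setC; last exact: measurableC.
  by rewrite (measure_negligible (measurableC ma) Pa0) sube0.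
rewrite diracE; have [aA|aA] := boolP (a \in A).
  apply/eqP; rewrite eq_le probability_le1 //= -Pa1.
  by apply: le_measure; rewrite ?inE // => x ->; rewrite -inE.
apply: (measure_negligible mA); apply: negligibleS Pa0 => x Ax xa.
by rewrite -xa mem_set in aA.
Qed.

End null_sets.

Lemma measurable_pos_reals (R : realType) : measurable [set b : R | 0 < b].
Proof. by apply: open_measurable; exact: open_gt. Qed.

Lemma measurable_nonpos_reals (R : realType) : measurable [set b : R | b <= 0].
Proof. by apply: closed_measurable; exact: closed_le. Qed.

Lemma probability_pos_reals (R : realType) (rho : probability R R) :
  rho [set b : R | b <= 0] = 0%E -> rho [set b : R | 0 < b] = 1%E.
Proof.
move=> rho_le0.
have -> : [set b : R | 0 < b] = ~` [set b : R | b <= 0].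
  by apply/seteqP; split => b /=; rewrite ltNge => /negP.
by rewrite probability_setC ?rho_le0 ?sube0 //; exact: measurable_nonpos_reals.
Qed.

Section thermal_moments.
Variable R : realType.
Implicit Types (b u : R).

Lemma thermal_momentE k b :
  thermal_moment k b = (odfact k)%:R * thermal_moment 1 b ^+ k.
Proof.
by rewrite /thermal_moment odfact1 mul1r expr1 muln1 exprVn exprMn -exprM mulnC.
Qed.

Lemma thermal_moment_gt0 k b : 0 < b -> 0 < thermal_moment k b.
Proof.
by move=> b_gt0; rewrite divr_gt0 ?ltr0n ?odfact_gt0 // mulr_gt0 // exprn_gt0.
Qed.

Lemma measurable_thermal_moment k :
  measurable_fun [set b : R | 0 < b] (thermal_moment k).
Proof.
have -> : thermal_moment k = (fun b => (odfact k)%:R * (12%:R * b ^+ 2)^-1 ^+ k).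
  by apply/funext => b; rewrite thermal_momentE /thermal_moment odfact1 div1r.
apply: (measurableT_comp (mulrl_measurable _)); apply: measurable_funX.
apply: open_continuous_measurable_fun; first exact: open_gt.
move=> b /[!inE] b_gt0.
apply: (@continuousV R R^o (fun b => 12%:R * b ^+ 2)).
  by rewrite mulf_neq0 // expf_neq0 // gt_eqF.
apply: (@continuousM R R^o (fun=> 12%:R)); first exact: (@cst_continuous R^o R^o).
exact: exprn_continuous.
Qed.

Definition inv_temp u : R := Num.sqrt (12%:R * u)^-1.

Lemma inv_temp_gt0 u : 0 < u -> 0 < inv_temp u.
Proof. by move=> u_gt0; rewrite sqrtr_gt0 invr_gt0 mulr_gt0. Qed.

Lemma thermal_moment1_inv_temp u : 0 < u -> thermal_moment 1 (inv_temp u) = u.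
Proof.
move=> u_gt0; rewrite /thermal_moment odfact1 expr1 muln1 sqr_sqrtr; last first.
  by rewrite invr_ge0 mulr_ge0 // ltW.
by field; rewrite gt_eqF.
Qed.

Lemma inv_temp_thermal_moment1 b : 0 < b -> inv_temp (thermal_moment 1 b) = b.
Proof.
move=> b_gt0; rewrite /inv_temp /thermal_moment odfact1 expr1 muln1.
have -> : (12%:R * (1 / (12%:R * b ^+ 2)))^-1 = b ^+ 2 :> R.
  by field; rewrite gt_eqF.
by rewrite sqrtr_sqr gtr0_norm.
Qed.

End thermal_moments.

Lemma thermal_witness_le (R : realType) m n (C h : nat -> R) (rho : probability R R) :
  (m <= n)%N -> thermal_witness n C h rho -> thermal_witness m C h rho.
Proof.
by move=> mn [rho_le0 Hk]; split => // k km; apply: Hk; exact: leq_trans km mn.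
Qed.

Section thermality.
Variables (R : realType) (n : nat) (a : R) (C h : nat -> R).
Hypotheses (n_gt0 : (0 < n)%N) (hqf : quasi_free_at h).
Hypothesis HC : forall m, (1 <= m <= n)%N -> C m.*2 = (odfact m)%:R * a ^+ m.

(* [wick2 = wickM C h 2] is omega(:phi^2:_M(x)). *)
Local Notation wick2 := (h 2%N + a).

Lemma thermal_witness_moment m rho k :
  thermal_witness m C h rho -> (k <= m)%N -> (k <= n)%N ->
  (\int[rho]_(b in [set b : R | (0 < b)%R]) (thermal_moment 1 b ^+ k)%:E =
   (wick2 ^+ k)%:E)%E.
Proof.
move=> [_ Hk] km kn.
have odfact_neq0 : (odfact k)%:R != 0 :> R by rewrite pnatr_eq0 -lt0n odfact_gt0.
transitivity (\int[rho]_(b in [set b : R | (0 < b)%R])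
    ((((odfact k)%:R)^-1 : R)%:E * (thermal_moment k b)%:E))%E.
  by apply: eq_integral => b _; rewrite -EFinM (thermal_momentE k) mulrA mulVf ?mul1r.
rewrite ge0_integralZl ?lee_fin ?invr_ge0 //.
- by rewrite Hk // (wickM_even HC hqf kn) -EFinM mulrA mulVf // mul1r.
- exact: measurable_pos_reals.
- by apply/measurable_EFinP; exact: measurable_thermal_moment.
- by move=> b b_gt0; rewrite lee_fin ltW // thermal_moment_gt0.
Qed.

Lemma thermal_witness_mean m rho :
  (0 < m)%N -> thermal_witness m C h rho ->
  (\int[rho]_(b in [set b : R | (0 < b)%R]) (thermal_moment 1 b)%:E = wick2%:E)%E.
Proof.
move=> m_gt0 w; rewrite -[wick2]expr1 -(thermal_witness_moment w m_gt0 n_gt0).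
by apply: eq_integral => b _; rewrite expr1.
Qed.

Lemma thermal_witness_wick2_gt0 m rho :
  (0 < m)%N -> thermal_witness m C h rho -> 0 < wick2.
Proof.
move=> m_gt0 w; rewrite -lte_fin -(thermal_witness_mean m_gt0 w).
apply: gt0_integral_gt0.
- exact: measurable_pos_reals.
- exact: measurable_thermal_moment.
- by move=> b; exact: thermal_moment_gt0.
- case: w => /probability_pos_reals rho1 _.
  (* [rho1] is stated through the [probability] coercion, the goal through [measure]. *)
  by rewrite -[X in X != _]/(rho [set b : R | 0 < b] : \bar R) rho1 oner_neq0.
Qed.

Lemma dirac_thermal_witness :
  0 < wick2 -> thermal_witness n C h \d_(inv_temp wick2).
Proof.
move=> wick2_gt0; have beta_gt0 := inv_temp_gt0 wick2_gt0.
split; first by rewrite /= diracE memNset //=; apply/negP; rewrite -ltNge.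
move=> k kn; rewrite integral_dirac; first last.
- by apply/measurable_EFinP; exact: measurable_thermal_moment.
- exact: measurable_pos_reals.
rewrite diracE mem_set // mul1e (wickM_even HC hqf kn).
by rewrite thermal_momentE thermal_moment1_inv_temp.
Qed.

Lemma thermal_witness_dirac rho :
  (2 <= n)%N -> thermal_witness n C h rho -> dirac_at_pos rho.
Proof.
move=> n_ge2 w; have wick2_gt0 := thermal_witness_wick2_gt0 n_gt0 w.
have [rho_le0 _] := w; have rho_pos := probability_pos_reals rho_le0.
have tm1_ne_null := integral_sqr_eq_negligible (@measurable_pos_reals R) rho_pos
  (measurable_thermal_moment 1) (fun b b_gt0 => ltW (thermal_moment_gt0 1 b_gt0))
  (thermal_witness_mean n_gt0 w) (thermal_witness_moment w n_ge2 n_ge2).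
exists (inv_temp wick2); split; first exact: inv_temp_gt0.
apply: negligible_setC1_dirac; first exact: measurable_set1.
have le0_null : rho.-negligible [set b : R | b <= 0].
  by apply/negligibleP => //; exact: measurable_nonpos_reals.
apply: negligibleS (negligibleU le0_null tm1_ne_null) => b /= b_ne.
have [b_gt0|b_le0] := ltP 0 b; [right; split => // | by left].
by apply/eqP => tm1b; apply: b_ne; rewrite -tm1b inv_temp_thermal_moment1.
Qed.

End thermality.

Theorem corollary1 (R : realType) (n : nat) (alpha Ric : R) (C h : nat -> R) :
  (1 <= n)%N ->
  C 2%N = alpha * Ric ->
  (forall m : nat, (1 <= m <= n)%N -> C m.*2 = (odfact m)%:R * (alpha ^+ m * Ric ^+ m)) ->
  quasi_free_at h ->
  (T_thermal n C h <-> T_thermal 1 C h) /\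
  ((2 <= n)%N -> forall rho : probability R R,
      thermal_witness n C h rho -> dirac_at_pos rho).
Proof.
(* The hypothesis [C 2 = alpha * Ric] is the case [m = 1] of the next one. *)
move=> n_gt0 _ HC hqf.
have HC' m : (1 <= m <= n)%N -> C m.*2 = (odfact m)%:R * (alpha * Ric) ^+ m.
  by move=> mn; rewrite exprMn HC.
split; last by move=> n_ge2 rho; exact: (thermal_witness_dirac n_gt0 hqf HC').
split=> [[rho w]|[rho w]]; first by exists rho; exact: thermal_witness_le w.
exists (\d_(inv_temp (h 2%N + alpha * Ric))).
exact/(dirac_thermal_witness hqf HC')/(thermal_witness_wick2_gt0 n_gt0 hqf HC' _ w).
Qed.
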